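(* Let $R$ be a Noetherian ring, $A$ an $R$-module and $B$ an $R$-submodule of $A$. If $\mathrm{sr}_R(B)$ and $\mathrm{sr}_R(A/B)$ are finite, then $\mathrm{sr}_R(A)\le\mathrm{sr}_R(B)+\mathrm{sr}_R(A/B)$.
   Context: A generating subset of an $R$-submodule is minimal if no proper subset of it generates that submodule. An $R$-module $M$ has special rank $\mathrm{sr}_R(M)=r$ if every finitely generated $R$-submodule of $M$ can be generated by $r$ elements and some finitely generated $R$-submodule of $M$ has a minimal generating subset of exactly $r$ elements. *)

From HB Require Import structures.
From mathcomp Require Import all_boot all_order all_algebra.
Set Implicit Arguments. Unset Strict Implicit. Unset Printing Implicit Defensive.
Import GRing.Theory.
Local Open Scope ring_scope.

Definition is_left_ideal (R : nzRingType) (I : R -> Prop) : Prop :=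
  I 0 /\ (forall x y, I x -> I y -> I (x + y)) /\ (forall a x, I x -> I (a * x)).
Definition is_right_ideal (R : nzRingType) (I : R -> Prop) : Prop :=
  I 0 /\ (forall x y, I x -> I y -> I (x + y)) /\ (forall a x, I x -> I (x * a)).

Definition noetherian_ring (R : nzRingType) : Prop :=
  (forall I : R -> Prop, is_left_ideal I ->
     exists s : seq R, forall x, I x <->
       exists c : 'I_(size s) -> R, x = \sum_(i < size s) c i * s`_i) /\
  (forall I : R -> Prop, is_right_ideal I ->
     exists s : seq R, forall x, I x <->
       exists c : 'I_(size s) -> R, x = \sum_(i < size s) s`_i * c i).

Definition is_submod (R : nzRingType) (V : lmodType R) (N : V -> Prop) : Prop :=
  N 0 /\ (forall x y, N x -> N y -> N (x + y)) /\ (forall a x, N x -> N (a *: x)).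

Definition gen (R : nzRingType) (V : lmodType R) (s : seq V) (v : V) : Prop :=
  exists c : 'I_(size s) -> R, v = \sum_(i < size s) c i *: s`_i.

Definition same_gen (R : nzRingType) (V : lmodType R) (s t : seq V) : Prop :=
  forall v, gen t v <-> gen s v.

(* has_sr M r : the submodule M (viewed as an R-module) has special rank r:
   every finitely generated submodule of M (= generated by a finite list of
   elements of M) can be generated by r elements, and some finitely generated
   submodule of M has a minimal generating subset of exactly r elements. *)
Definition has_sr (R : nzRingType) (V : lmodType R) (M : V -> Prop) (r : nat) : Prop :=
  (forall s : seq V, (forall x, x \in s -> M x) ->
     exists t : seq V, size t = r /\ same_gen s t) /\
  (exists s : seq V, [/\ uniq s, size s = r, (forall x, x \in s -> M x) &
     forall t : seq V, {subset t <= s} -> ~ {subset s <= t} -> ~ same_gen s t]).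

(* Given a_1, ..., a_k in A, lift rC generators of the image f<a_1, ..., a_k>
   back into <a_1, ..., a_k>; their span together with the kernel part
   <a_1, ..., a_k> ∩ B is all of <a_1, ..., a_k>. Over a Noetherian ring the
   kernel part is finitely generated, hence generated by rB elements, so every
   finitely generated submodule of A is (rB + rC)-generated. For the least n
   with this property, an n-element generating set of a submodule that is not
   (n - 1)-generated is a minimal generating set, so sr(A) = n <= rB + rC. *)

From mathcomp Require Import all_boot all_order all_algebra.
From Stdlib Require Import Classical.
Set Implicit Arguments. Unset Strict Implicit. Unset Printing Implicit Defensive.
Import GRing.Theory.
Local Open Scope ring_scope.

Section Span.
Variables (R : nzRingType) (V : lmodType R).
Implicit Types (s t : seq V) (u v x : V).

Lemma gen0 s : gen s 0.
Proof. by exists (fun=> 0); rewrite big1 // => i _; rewrite scale0r. Qed.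

Lemma genD s u v : gen s u -> gen s v -> gen s (u + v).
Proof.
case=> c -> [d ->]; exists (fun i => c i + d i).
by rewrite -big_split; apply: eq_bigr => i _; rewrite scalerDl.
Qed.

Lemma genZ s a v : gen s v -> gen s (a *: v).
Proof.
case=> c ->; exists (fun i => a * c i).
by rewrite scaler_sumr; apply: eq_bigr => i _; rewrite scalerA.
Qed.

Lemma genN s v : gen s v -> gen s (- v).
Proof. by rewrite -scaleN1r; apply: genZ. Qed.

Lemma genB s u v : gen s u -> gen s v -> gen s (u - v).
Proof. by move=> gu /genN; apply: genD. Qed.

Lemma is_submod_gen s : is_submod (gen s).
Proof. by split; [apply: gen0 | split; [apply: genD | apply: genZ]]. Qed.

Lemma gen_sum s (I : Type) (r : seq I) (P : pred I) (F : I -> V) :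
  (forall i, P i -> gen s (F i)) -> gen s (\sum_(i <- r | P i) F i).
Proof. by move=> gF; apply: big_ind => //; [apply: gen0 | apply: genD]. Qed.

Lemma gen_mem s x : x \in s -> gen s x.
Proof.
move=> xs; have ix : (index x s < size s)%N by rewrite index_mem.
exists (fun i => (val i == index x s)%:R).
rewrite (bigD1 (Ordinal ix)) //= eqxx scale1r nth_index // big1 ?addr0 //.
by move=> i; rewrite -val_eqE /= => /negbTE ->; rewrite scale0r.
Qed.

Lemma gen_least (P : V -> Prop) s v :
  is_submod P -> (forall x, x \in s -> P x) -> gen s v -> P v.
Proof.
case=> P0 [PD PZ] sP [c ->]; apply: big_ind => // i _.
by apply/PZ/sP/mem_nth.
Qed.

Lemma gen_subset s t v : {subset s <= t} -> gen s v -> gen t v.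
Proof. by move=> st; apply: gen_least (is_submod_gen t) _ => x /st/gen_mem. Qed.

Lemma gen_catD s t u v : gen s u -> gen t v -> gen (s ++ t) (u + v).
Proof.
move=> gu gv; apply: genD.
  by apply: gen_subset gu => x xs; rewrite mem_cat xs.
by apply: gen_subset gv => x xt; rewrite mem_cat xt orbT.
Qed.

Lemma gen_nil v : gen [::] v -> v = 0.
Proof. by case=> c ->; rewrite big_ord0. Qed.

Lemma gen_cons x s v : gen s v -> gen (x :: s) v.
Proof. by apply: gen_subset => y ys; rewrite inE ys orbT. Qed.

Lemma gen_consP x s v :
  gen (x :: s) v <-> exists a v0, gen s v0 /\ v = a *: x + v0.
Proof.
split=> [[c ->]|[a [v0 [gv0 ->]]]].
  rewrite big_ord_recl; exists (c ord0), (\sum_(i < size s) c (lift ord0 i) *: s`_i).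
  by split=> //; exists (fun i => c (lift ord0 i)).
by apply: genD; [apply/genZ/gen_mem/mem_head | apply: gen_cons].
Qed.

Lemma same_gen_trans s t t' : same_gen s t -> same_gen t t' -> same_gen s t'.
Proof. by move=> st tt' v; rewrite tt' st. Qed.

Lemma gen_resize t n :
  (size (undup t) <= n)%N -> exists t', size t' = n /\ same_gen t t'.
Proof.
move=> le_tn; exists (undup t ++ nseq (n - size (undup t)) 0).
split; first by rewrite size_cat size_nseq subnKC.
move=> v; split; last by apply: gen_subset => x xt; rewrite mem_cat mem_undup xt.
apply: gen_least (is_submod_gen t) _ => x; rewrite mem_cat mem_undup.
by case/orP=> [/gen_mem // | /nseqP [-> _]]; apply: gen0.
Qed.

End Span.

Section LinearImage.
Variables (R : nzRingType) (A C : lmodType R) (f : {linear A -> C}).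

Lemma gen_map s v : gen s v -> gen (map f s) (f v).
Proof.
case=> c ->; rewrite /gen size_map; exists c; rewrite linear_sum.
by apply: eq_bigr => i _; rewrite linearZ (nth_map 0).
Qed.

Lemma gen_map_lift s w : gen (map f s) w -> exists v, gen s v /\ f v = w.
Proof.
rewrite /gen size_map => -[c ->]; exists (\sum_(i < size s) c i *: s`_i).
split; first by exists c.
by rewrite linear_sum; apply: eq_bigr => i _; rewrite linearZ (nth_map 0).
Qed.

Lemma lift_gens s t : (forall y, y \in t -> gen (map f s) y) ->
  exists2 u, (forall x, x \in u -> gen s x) & map f u = t.
Proof.
elim: t => [|y t IH] gt; first by exists [::].
have [v [gv <-]] := gen_map_lift (gt y (mem_head y t)).
have [u gu <-] := IH (fun z zt => gt z (@mem_behead _ (y :: t) z zt)).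
by exists (v :: u) => // x; rewrite inE => /orP [/eqP -> | /gu].
Qed.

Lemma same_gen_cat_ker s u w :
  (forall x, x \in u -> gen s x) -> same_gen (map f s) (map f u) ->
  (forall v, gen w v <-> gen s v /\ f v = 0) -> same_gen s (u ++ w).
Proof.
move=> gu fsu gw v; split.
  apply: gen_least (is_submod_gen s) _ => x; rewrite mem_cat.
  by case/orP=> [/gu // | /gen_mem /gw []].
move=> gv; have [y [guy fy]] := gen_map_lift ((fsu (f v)).2 (gen_map gv)).
have gsy : gen s y by apply: gen_least (is_submod_gen s) gu guy.
have gwvy : gen w (v - y) by apply/gw; rewrite linearB /= fy subrr; split=> //; apply: genB.
by rewrite -(subrK y v) addrC; apply: gen_catD.
Qed.

End LinearImage.

Definition left_noetherian (R : nzRingType) : Prop :=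
  forall I : R -> Prop, is_left_ideal I ->
    exists l : seq R, forall a, I a <->
      exists c : 'I_(size l) -> R, a = \sum_(i < size l) c i * l`_i.

Lemma noetherian_left (R : nzRingType) : noetherian_ring R -> left_noetherian R.
Proof. by case. Qed.

Lemma is_submodI (R : nzRingType) (V : lmodType R) (P Q : V -> Prop) :
  is_submod P -> is_submod Q -> is_submod (fun v => P v /\ Q v).
Proof.
case=> P0 [PD PZ] [Q0 [QD QZ]].
by split; [|split=> [x y [? ?] [? ?] | a x [? ?]]]; split; auto.
Qed.

Section NoetherianIntersection.
Variables (R : nzRingType) (V : lmodType R) (K : V -> Prop).
Hypotheses (noethR : left_noetherian R) (subK : is_submod K).

Definition fg_genI (s : seq V) : Prop :=
  exists w : seq V, (forall x, x \in w -> K x) /\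
    forall v, gen w v <-> gen s v /\ K v.

(* <x :: s> ∩ K is generated by <s> ∩ K together with lifts of generators of
   this left ideal of coefficients of x. *)
Definition coef_ideal (x : V) (s : seq V) (a : R) : Prop :=
  exists v, gen s v /\ K (a *: x + v).

Lemma coef_ideal_left x s : is_left_ideal (coef_ideal x s).
Proof.
have [K0 [KD KZ]] := subK.
split; first by exists 0; rewrite scale0r addr0; split=> //; apply: gen0.
split=> [a b [u [gu Ku]] [v [gv Kv]] | b a [v [gv Kv]]].
  exists (u + v); split; first exact: genD.
  by rewrite scalerDl addrACA; apply: KD.
exists (b *: v); split; first exact: genZ.
by rewrite -scalerA -scalerDr; apply: KZ.
Qed.

Lemma coef_ideal_lift x s : exists g : seq V,
  (forall y, y \in g -> K y /\ gen (x :: s) y) /\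
  forall a, coef_ideal x s a -> exists y, gen g y /\ gen s (a *: x - y).
Proof.
have [l gen_l] := noethR (coef_ideal_left x s).
have l_in (i : 'I_(size l)) : exists v, gen s v /\ K (l`_(val i) *: x + v).
  apply/gen_l; exists (fun j => (j == i)%:R).
  rewrite (bigD1 i) //= eqxx mul1r big1 ?addr0 // => j /negbTE ->.
  by rewrite mul0r.
have [vs /all_and2 [gvs Kvs]] := fin_all_exists l_in.
pose lifted i := l`_(val i) *: x + vs i.
exists (codom lifted); split.
  move=> y /codomP [i ->]; split; first exact: Kvs.
  by apply/gen_consP; exists l`_i, (vs i).
move=> a /gen_l [c ->]; exists (\sum_i c i *: lifted i); split.
  by apply: gen_sum => i _; apply/genZ/gen_mem/codom_f.
have -> : \sum_i c i *: lifted i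
    = (\sum_i c i * l`_i) *: x + \sum_i c i *: vs i.
  by rewrite scaler_suml -big_split; apply: eq_bigr => i _; rewrite scalerDr scalerA.
by rewrite opprD addrA subrr add0r; apply/genN/gen_sum => i _; apply/genZ.
Qed.

Lemma fg_genI_cons x s : fg_genI s -> fg_genI (x :: s).
Proof.
have [K0 [KD KZ]] := subK.
case=> w [wK gw]; have [g [gK lift_g]] := coef_ideal_lift x s.
exists (g ++ w); split.
  by move=> y; rewrite mem_cat => /orP [/gK [] | /wK].
move=> v; split.
  apply: gen_least (is_submodI (is_submod_gen _) subK) _ => y.
  rewrite mem_cat => /orP [/gK [] // | /gen_mem /gw [gy Ky]].
  by split=> //; apply: gen_cons.
case=> /gen_consP [a [v0 [gv0 ->]]] Kv.
have [y [gy gsy]] := lift_g a (ex_intro _ v0 (conj gv0 Kv)).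
have Ky : K y by apply: gen_least subK _ gy => z /gK [].
have gwr : gen w (a *: x + v0 - y).
  apply/gw; split; first by rewrite addrAC; apply: genD.
  by apply: KD Kv _; rewrite -scaleN1r; apply: KZ.
by rewrite -(subrK y (a *: x + v0)) addrC; apply: gen_catD.
Qed.

Lemma fg_genI_all s : fg_genI s.
Proof.
elim: s => [|x s]; last exact: fg_genI_cons.
exists [::]; split=> // v; split=> [/gen_nil -> | [/gen_nil -> _]].
  by split; [apply: gen0 | case: subK].
exact: gen0.
Qed.

End NoetherianIntersection.

Section SpecialRank.
Variables (R : nzRingType) (V : lmodType R).

Definition fg_ngen (n : nat) : Prop :=
  forall s : seq V, exists t : seq V, size t = n /\ same_gen s t.

Lemma has_sr_min n :
  fg_ngen n.+1 -> ~ fg_ngen n -> has_sr (fun _ : V => True) n.+1.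
Proof.
move=> ngenS not_ngen.
have [s0 hs0] : exists s0 : seq V, forall t, size t = n -> ~ same_gen s0 t.
  apply: NNPP => no_s0; apply: not_ngen => s; apply: NNPP => no_t.
  by apply: no_s0; exists s => t szt st; apply: no_t; exists t.
have large (t : seq V) : same_gen s0 t -> (n < size (undup t))%N.
  rewrite ltnNge => st; apply/negP => /gen_resize [t' [szt' tt']].
  exact: hs0 t' szt' (same_gen_trans st tt').
have [t [szt st]] := ngenS s0.
split=> [s _ | ]; first exact: ngenS.
exists t; split=> //.
  by rewrite (uniq_size_uniq (undup_uniq t) (mem_undup t)) eqn_leq size_undup andbT szt large.
move=> t' sub_t't not_sub st'.
have sub_undup : {subset undup t' <= t} by move=> z; rewrite mem_undup => /sub_t't.
have size_le : (size t <= size (undup t'))%N.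
  by rewrite szt; apply: large (same_gen_trans st st').
have [_ eq_t't] := uniq_min_size (undup_uniq t') sub_undup size_le.
by apply: not_sub => z; rewrite -eq_t't mem_undup.
Qed.

Lemma has_sr_le n :
  fg_ngen n -> exists r, has_sr (fun _ : V => True) r /\ (r <= n)%N.
Proof.
elim: n => [|n IH] ngen.
  exists 0%N; split=> //; split=> [s _ | ]; first exact: ngen.
  by exists [::]; split=> // t _ not_sub; case: not_sub => z; rewrite in_nil.
have [/IH [r [sr_r le_rn]] | not_ngen] := classic (fg_ngen n).
  by exists r; split=> //; apply: leqW.
by exists n.+1; split=> //; apply: has_sr_min.
Qed.

End SpecialRank.

Theorem lemma2 (R : nzRingType) (A : lmodType R) (B : A -> Prop)
    (C : lmodType R) (f : {linear A -> C}) :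
  noetherian_ring R ->
  is_submod B ->
  (forall c : C, exists a : A, f a = c) ->
  (forall a : A, f a = 0 <-> B a) ->
  forall rB rC : nat, has_sr B rB -> has_sr (fun _ : C => True) rC ->
  exists rA : nat, has_sr (fun _ : A => True) rA /\ (rA <= rB + rC)%N.
Proof.
move=> noethR subB _ kerB rB rC [ngenB _] [ngenC _].
apply: has_sr_le => s.
have [t [szt st]] := ngenC (map f s) (fun _ _ => I).
have [u gu fu] := lift_gens (fun y yt => (st y).1 (gen_mem yt)).
have [w [wB gw]] := fg_genI_all (noetherian_left noethR) subB s.
have [tB [sztB stB]] := ngenB w wB.
exists (u ++ tB); split.
  by rewrite size_cat -(size_map f u) fu szt sztB addnC.
apply: (same_gen_cat_ker (f := f)) gu _ _; first by rewrite fu.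
by move=> v; rewrite (stB v) gw kerB.
Qed.
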